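(* Assume $q\ge3$. Then $BC(0)=1$, and for every positive integer $n$ divisible by $q-1$ and every $\lambda\in\mathbb{F}_q$, \[ (1-(\theta-\lambda)^n)\,BC(n)=\sum_{\substack{\beta\in\mathbb{N}^{q-1}\\ n-|q^\beta|\ge0}}\left[\begin{matrix} n\\ n-|q^\beta|,\ |q^\beta|\end{matrix}\right](\theta-\lambda)^{n-1-|q^\beta|}\,BC(n-|q^\beta|). \]
   Context: $A=\mathbb{F}_q[\theta]$, $K=\mathbb{F}_q(\theta)$. $D_i$ is the product of all monic polynomials of degree $i$ in $A$, and $e_C(z)=\sum_{j\ge0}z^{q^j}/D_j$. For $n=\sum_i n_iq^i$ written in base $q$ ($0\le n_i\le q-1$), the Carlitz factorial is $\Pi(n)=\prod_i D_i^{n_i}$, and for non-negative integers $n,k_1,\dots,k_j$, $\left[\begin{smallmatrix} n\\ k_1,\dots,k_j\end{smallmatrix}\right]=\Pi(n)/(\Pi(k_1)\cdots\Pi(k_j))\in K$. The Bernoulli–Carlitz numbers $BC(n)\in K$, for $n\ge0$ divisible by $q-1$, are defined by $z/e_C(z)=\sum_{n\ge0,\,(q-1)\mid n}\frac{BC(n)}{\Pi(n)}z^n$. For $\beta\in\mathbb{N}^{q-1}$, $|q^\beta|=\sum_i q^{\beta_i}$. *)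

From HB Require Import structures.
From mathcomp Require Import all_boot all_order all_algebra.
Set Implicit Arguments. Unset Strict Implicit. Unset Printing Implicit Defensive.
Import Order.TTheory GRing.Theory Num.Theory.
Local Open Scope ring_scope.

Section Carlitz.
Variable F : finFieldType.

(* A = F_q[theta] = {poly F},  K = F_q(theta) = {fraction {poly F}} *)
Definition Kfield := {fraction {poly F}}.
Definition toK (p : {poly F}) : Kfield := FracField.tofrac p.
Definition theta : Kfield := toK 'X.
Definition qq : nat := #|F|.

(* D_i : product of all monic polynomials of degree i in A; a monic
   polynomial of degree i is written uniquely as X^i + sum_{j<i} c_j X^j. *)
Definition Dpoly (i : nat) : {poly F} :=
  \prod_(c : {ffun 'I_i -> F}) ('X^i + \sum_(j < i) c j *: 'X^j).
Definition D (i : nat) : Kfield := toK (Dpoly i).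

Definition qdigit (n i : nat) : nat := ((n %/ qq ^ i) %% qq)%N.

(* Carlitz factorial Pi(n) = prod_i D_i^{n_i}; digits n_i vanish for i > n. *)
Definition CPi (n : nat) : Kfield := \prod_(i < n.+1) D i ^+ qdigit n i.

Definition cbinom (n k1 k2 : nat) : Kfield := CPi n / (CPi k1 * CPi k2).

(* coefficients of e_C(z)/z = sum_j z^(q^j - 1)/D_j *)
Definition eCz_coef (m : nat) : Kfield :=
  \sum_(j < m.+1 | (qq ^ j)%N == m.+1) (D j)^-1.

(* first n+1 coefficients of the formal power series inverse of
   a(z) = sum_m a m z^m (a 0 invertible):
   b_0 = a_0^-1, b_m = - a_0^-1 * sum_{k=1}^m a_k b_{m-k}. *)
Fixpoint psinv_upto (a : nat -> Kfield) (n : nat) : seq Kfield :=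
  match n with
  | 0 => [:: (a 0%N)^-1]
  | m.+1 => let s := psinv_upto a m in
            rcons s (- (a 0%N)^-1 *
                     \sum_(k < m.+1) a k.+1 * nth 0 s (m - k)%N)
  end.
Definition psinv (a : nat -> Kfield) (n : nat) : Kfield :=
  nth 0 (psinv_upto a n) n.

(* z / e_C(z) = sum_n BC(n)/Pi(n) z^n, i.e. BC(n) = Pi(n) * [z^n](e_C(z)/z)^-1 *)
Definition BC (n : nat) : Kfield := CPi n * psinv eCz_coef n.

Definition qabs (r N : nat) (beta : {ffun 'I_r -> 'I_N}) : nat :=
  (\sum_(i < r) qq ^ (beta i))%N.

End Carlitz.

From HB Require Import structures.
From mathcomp Require Import all_boot all_order all_algebra all_field ring.
Import Order.TTheory GRing.Theory Num.Theory.
Local Open Scope ring_scope.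

(* Write q = #|F|, t = theta - lambda, g_n = BC(n)/Pi(n) for the coefficients of
   z/e_C(z), and |beta| = |q^beta|.  The proof compares coefficients in a
   functional equation of power series.
   1. For a field L containing F and th in L, e_j(x) = prod_(deg a < j) (x + a(th))
      is F-linear with e_(j+1)(x) = e_j(x)^q - e_j(th^j)^(q-1) e_j(x); evaluating
      at powers of th through complete symmetric functions of th, th^q, ...
      gives D_(j+1) = (theta^(q^(j+1)) - theta) D_j^q.
   2. Hence the truncated Carlitz exponential satisfies e(t z) = t e(z) + e(z)^q,
      i.e. e(t z) = e(z) (t + e(z)^(q-1)) modulo z^(n+2).
   3. For G(z) = z/e(z) this gives t z G(z) = z (t + e(z)^(q-1)) G(t z); expanding
      e(z)^(q-1) as a sum over beta : [0, q-1) -> [0, n] and comparing the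
      coefficients of z^(n+1) yields
         t (1 - t^n) g_n = sum_beta t^(n-|beta|) g_(n-|beta|) / prod_i D_(beta_i).
   4. As beta has q-1 < q entries, the base-q digits of |beta| count its entries,
      so Pi(|beta|) = prod_i D_(beta_i); multiplying by Pi(n)/t gives the claim.
   BC(0) = 1 is immediate from the definitions. *)

(* Raising to the power q = #|F| is additive in every commutative ring whose
   characteristic is that of F, since q is a power of that characteristic. *)
Lemma exprD_card (F : finFieldType) (R : comNzRingType) :
  (forall p, p \in [pchar F] -> p \in [pchar R]) ->
  forall x y : R, (x + y) ^+ #|F| = x ^+ #|F| + y ^+ #|F|.
Proof.
move=> pcharFR x y; have [p p_pr pF] := finPcharP F.
rewrite (card_pprimeChar pF); apply: exprDn_pchar.
by rewrite (eq_pnat _ (pcharf_eq (pcharFR p pF))) pnatX (pnat_id p_pr).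
Qed.

Section LinearizedProduct.
Context {F : finFieldType} {L : fieldType} (iota : {rmorphism F -> L}) (th : L).
Local Notation q := #|F|.

Lemma exprD_cardL (x y : L) : (x + y) ^+ q = x ^+ q + y ^+ q.
Proof. by apply: exprD_card => p; apply: rmorph_pchar. Qed.

Lemma iota_expr_card (c : F) : iota c ^+ q = iota c.
Proof. by rewrite -rmorphXn expf_card. Qed.

(* The polynomial X^q - X splits over F, so prod_c (w - c) = w^q - w. *)
Lemma prod_translates (w : L) : \prod_(c : F) (w - iota c) = w ^+ q - w.
Proof.
have := congr1 (fun p => (map_poly iota p).[w]) (finField_genPoly F).
rewrite /= rmorph_prod horner_prod rmorphB /= map_polyXn map_polyX !hornerE => ->.
by apply: eq_bigr => c _; rewrite rmorphB /= map_polyX map_polyC !hornerE.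
Qed.

Lemma prod_affine (y z : L) :
  \prod_(c : F) (y + iota c * z) = y ^+ q - z ^+ q.-1 * y.
Proof.
have q_gt1 := finNzRing_gt1 F.
have [->|z_neq0] := eqVneq z 0.
  under eq_bigr do rewrite mulr0 addr0.
  by rewrite prodr_const expr0n -subn1 subn_eq0 leqNgt q_gt1 mul0r subr0.
have -> : \prod_(c : F) (y + iota c * z) = z ^+ q * \prod_(c : F) (y / z - iota c).
  rewrite -[z ^+ q]prodr_const (reindex_inj oppr_inj) -big_split /=.
  apply: eq_bigr => c _; rewrite rmorphN mulNr mulrBr mulrCA divff //.
  by rewrite mulr1 mulrC.
rewrite prod_translates mulrBr -exprMn mulrCA divff // mulr1.
by rewrite -(prednK (ltnW q_gt1)) exprS /= exprSr -mulrA [z * _]mulrC divfK.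
Qed.

(* The image in L of the polynomial of degree < j with coefficients c, and
   e_j(x) = prod_{deg a < j} (x + a(th)); thus e_j(th^j) is the image of D_j. *)
Definition polyval {j} (c : {ffun 'I_j -> F}) : L := \sum_(k < j) iota (c k) * th ^+ k.
Definition eprod j (x : L) : L := \prod_(c : {ffun 'I_j -> F}) (x + polyval c).

Lemma eprod0 (x : L) : eprod 0 x = x.
Proof.
rewrite /eprod; under eq_bigr do rewrite /polyval big_ord0 addr0.
by rewrite prodr_const card_ffun card_ord expn0 expr1.
Qed.

Definition ffun_extend {j} (c0 : F) (g : {ffun 'I_j -> F}) : {ffun 'I_j.+1 -> F} :=
  [ffun i => if unlift ord_max i is Some k then g k else c0].

Lemma polyval_extend j c0 (g : {ffun 'I_j -> F}) :
  polyval (ffun_extend c0 g) = polyval g + iota c0 * th ^+ j.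
Proof.
rewrite /polyval big_ord_recr /= ffunE unlift_none; congr (_ + _).
apply: eq_bigr => k _; rewrite ffunE.
have -> : widen_ord (leqnSn j) k = lift ord_max k.
  by apply: val_inj; rewrite /= /bump leqNgt ltn_ord.
by rewrite liftK.
Qed.

(* Grouping the polynomials of degree < j+1 by their coefficient of th^j. *)
Lemma eprod_split j (x : L) :
  eprod j.+1 x = \prod_(c0 : F) eprod j (x + iota c0 * th ^+ j).
Proof.
rewrite /eprod pair_big /=.
rewrite (reindex (fun p : F * {ffun 'I_j -> F} => ffun_extend p.1 p.2)) /=.
  by apply: eq_bigr => -[c0 g] _ /=; rewrite polyval_extend addrA addrAC.
exists (fun f => (f ord_max, [ffun k => f (lift ord_max k)])) => [[c0 g] _ | f _].
  rewrite ffunE unlift_none; congr (_, _).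
  by apply/ffunP => k; rewrite !ffunE liftK.
apply/ffunP => i; rewrite ffunE /=.
by case: unliftP => [k ->|->]; rewrite ?ffunE.
Qed.

Definition flinear (f : L -> L) :=
  (forall x y, f (x + y) = f x + f y) /\ (forall c x, f (iota c * x) = iota c * f x).

(* If e_j is F-linear, each factor of eprod_split is e_j(x) + c e_j(th^j),
   and prod_affine gives the recurrence for e_(j+1). *)
Lemma eprod_rec_of_linear j (x : L) : flinear (eprod j) ->
  eprod j.+1 x = eprod j x ^+ q - eprod j (th ^+ j) ^+ q.-1 * eprod j x.
Proof.
move=> [eD eZ]; rewrite eprod_split.
under eq_bigr do rewrite eD eZ.
exact: prod_affine.
Qed.

(* e_j is F-linear, by induction through the recurrence: the q-th power is
   additive and fixes the image of F. *)
Lemma eprod_linear j : flinear (eprod j).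
Proof.
elim: j => [|j IH]; first by split=> *; rewrite !eprod0.
have [eD eZ] := IH.
split=> [x y|c x]; rewrite !eprod_rec_of_linear //.
  by rewrite eD exprD_cardL mulrDr opprD addrACA.
by rewrite eZ exprMn iota_expr_card mulrBr mulrCA.
Qed.

Lemma eprodS j (x : L) :
  eprod j.+1 x = eprod j x ^+ q - eprod j (th ^+ j) ^+ q.-1 * eprod j x.
Proof. exact/eprod_rec_of_linear/eprod_linear. Qed.

(* Complete homogeneous symmetric functions: hsym x n m = h_m(x_0, ..., x_(n-1)),
   given by h_m() = [m = 0], h_0 = 1 and
   h_(m+1)(x_0..x_n) = h_(m+1)(x_0..x_(n-1)) + x_n h_m(x_0..x_n). *)
Fixpoint hsym (x : nat -> L) (n : nat) : nat -> L :=
  match n with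
  | 0 => fun m => if m is 0 then 1 else 0
  | n'.+1 => let h := hsym x n' in
     fix hn m := if m is m'.+1 then h m + x n' * hn m' else 1
  end.

Lemma hsym0 (x : nat -> L) n : hsym x n.+1 0 = 1. Proof. by []. Qed.

Lemma hsymS (x : nat -> L) n m :
  hsym x n.+1 m.+1 = hsym x n m.+1 + x n * hsym x n.+1 m.
Proof. by []. Qed.

Lemma hsym_one (x : nat -> L) m : hsym x 1 m = x 0%N ^+ m.
Proof. by elim: m => [|m IH] //; rewrite hsymS IH /= add0r exprS. Qed.

Lemma hsymS_first (x : nat -> L) n m :
  hsym x n.+1 m.+1 = hsym (fun i => x i.+1) n m.+1 + x 0%N * hsym x n.+1 m.
Proof.
elim: n m => [|n IHn] m; first by rewrite hsymS /= add0r.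
elim: m => [|m IHm].
  by rewrite hsymS IHn [hsym _ n.+1 1]hsymS !hsym0 !mulr1 addrAC.
rewrite hsymS IHn [hsym _ n.+1 m.+2]hsymS.
have -> : hsym x n.+1 m.+1 = hsym x n.+2 m.+1 - x n.+1 * hsym x n.+2 m.
  by rewrite hsymS addrK.
rewrite IHm; ring.
Qed.

Lemma hsym_shift (x : nat -> L) n m :
  hsym (fun i => x i.+1) n m.+1 - hsym x n m.+1 = (x n - x 0%N) * hsym x n.+1 m.
Proof.
have := hsymS_first x n m; rewrite hsymS => e.
have -> : hsym (fun i => x i.+1) n m.+1 =
    hsym x n m.+1 + x n * hsym x n.+1 m - x 0%N * hsym x n.+1 m by rewrite e addrK.
ring.
Qed.

Lemma hsym_frobenius (x y : nat -> L) n m :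
  (forall i, y i = x i ^+ q) -> hsym y n m = hsym x n m ^+ q.
Proof.
move=> y_frob; have q_gt0 : (0 < q)%N by rewrite ltnW ?finNzRing_gt1.
elim: n m => [|n IHn] m.
  by case: m => [|m]; rewrite ?expr1n // expr0n eqn0Ngt q_gt0.
elim: m => [|m IHm]; first by rewrite !hsym0 expr1n.
by rewrite !hsymS exprD_cardL exprMn IHn IHm y_frob.
Qed.

Definition thpow (i : nat) : L := th ^+ (q ^ i).

(* Inductive step for eprod_eval below: the recurrence eprodS, the evaluation
   formula at level j, and hsym_shift give e_(j+1) on the powers th^(j+1+m). *)
Lemma eprod_eval_step j m :
  (forall m, eprod j (th ^+ (j + m)) = eprod j (th ^+ j) * hsym thpow j.+1 m) ->
  eprod j.+1 (th ^+ (j.+1 + m)) =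
    eprod j (th ^+ j) ^+ q * ((thpow j.+1 - thpow 0) * hsym thpow j.+2 m).
Proof.
move=> eval_j; rewrite eprodS addSnnS !eval_j.
rewrite mulrA -exprSr prednK ?(ltnW (finNzRing_gt1 F)) // exprMn -mulrBr -hsym_shift.
congr (_ * (_ - _)); apply/esym/hsym_frobenius => i.
by rewrite /thpow -exprM expnSr.
Qed.

Lemma eprod_eval j m : eprod j (th ^+ (j + m)) = eprod j (th ^+ j) * hsym thpow j.+1 m.
Proof.
elim: j m => [|j IH] m; first by rewrite !eprod0 hsym_one /thpow expr1 mul1r add0n.
rewrite (eprod_eval_step j m IH).
have := eprod_eval_step j 0 IH; rewrite addn0 hsym0 mulr1 => ->.
by rewrite mulrA.
Qed.

(* The recursion behind D_(j+1) = (th^(q^(j+1)) - th) D_j^q. *)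
Lemma eprod_top j :
  eprod j.+1 (th ^+ j.+1) = (th ^+ (q ^ j.+1) - th) * eprod j (th ^+ j) ^+ q.
Proof.
have := eprod_eval_step j 0 (eprod_eval j); rewrite addn0 => ->.
by rewrite hsym0 mulr1 mulrC /thpow expn0 expr1.
Qed.

Lemma expr_card_shift (lam : F) i :
  (th - iota lam) ^+ (q ^ i) = th ^+ (q ^ i) - iota lam.
Proof.
elim: i => [|i IH]; first by rewrite !expn0 !expr1.
by rewrite expnSr exprM IH -rmorphN exprD_cardL -exprM iota_expr_card.
Qed.

End LinearizedProduct.

Section CarlitzFactorials.
Variable F : finFieldType.
Local Notation K := (Kfield F).
Local Notation q := #|F|.
Local Notation th := (theta F).
Local Notation iotK := ((@FracField.tofrac _) \o (@polyC F)).

Lemma D_eprod j : D F j = eprod iotK th j (th ^+ j).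
Proof.
rewrite /D /toK /eprod /Dpoly rmorph_prod; apply: eq_bigr => c _.
rewrite rmorphD rmorphXn rmorph_sum /polyval; congr (_ + _).
by apply: eq_bigr => k _; rewrite -mul_polyC rmorphM rmorphXn.
Qed.

Lemma D0 : D F 0 = 1.
Proof. by rewrite D_eprod eprod0. Qed.

Lemma D_rec j : D F j.+1 = (th ^+ (q ^ j.+1) - th) * D F j ^+ q.
Proof. by rewrite !D_eprod eprod_top. Qed.

(* theta is transcendental over F, so th^(q^(j+1)) - th, whose coefficient
   of degree q^(j+1) > 1 is 1, is nonzero. *)
Lemma frobenius_bracket_neq0 j : th ^+ (q ^ j.+1) - th != 0.
Proof.
have q_pow_gt1 : (1 < q ^ j.+1)%N by rewrite -(exp1n j.+1) ltn_exp2r ?finNzRing_gt1.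
rewrite /theta /toK -rmorphXn -rmorphB tofrac_eq0.
apply/eqP => /(congr1 (fun p : {poly F} => p`_(q ^ j.+1)%N)).
rewrite coefB coefXn coefX eqxx (gtn_eqF q_pow_gt1) subr0 coef0.
exact/eqP/oner_neq0.
Qed.

Lemma D_neq0 j : D F j != 0.
Proof.
elim: j => [|j IH]; first by rewrite D0 oner_neq0.
by rewrite D_rec mulf_neq0 ?frobenius_bracket_neq0 ?expf_neq0.
Qed.

Definition expC N : {poly K} := \sum_(j < N) (D F j)^-1 *: 'X^(q ^ j).

End CarlitzFactorials.

Section TruncatedSeries.
Context {R : comNzRingType}.

(* p = r mod X^M: the first M coefficients agree.  Polynomials stand for
   truncated power series, and this congruence is compatible with sums,
   products and the substitution z -> t z. *)
Definition eqmodX (M : nat) (p r : {poly R}) := forall i, (i < M)%N -> p`_i = r`_i.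

Lemma eqmodX_sym {M p r} : eqmodX M p r -> eqmodX M r p.
Proof. by move=> pr i /pr. Qed.

Lemma eqmodX_trans {M p r s} : eqmodX M p r -> eqmodX M r s -> eqmodX M p s.
Proof. by move=> pr rs i lt_iM; rewrite pr // rs. Qed.

Lemma eqmodXDl {M} s {p r} : eqmodX M p r -> eqmodX M (s + p) (s + r).
Proof. by move=> pr i lt_iM; rewrite !coefD pr. Qed.

Lemma eqmodXMl {M} s {p r} : eqmodX M p r -> eqmodX M (s * p) (s * r).
Proof.
move=> pr i lt_iM; rewrite !coefM; apply: eq_bigr => j _.
by rewrite pr // (leq_ltn_trans (leq_subr _ _) lt_iM).
Qed.

Lemma eqmodXMr {M} s {p r} : eqmodX M p r -> eqmodX M (p * s) (r * s).
Proof. by rewrite ![_ * s]mulrC; apply: eqmodXMl. Qed.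

Lemma comp_scaleX (t : R) (p : {poly R}) :
  p \Po (t *: 'X) = \poly_(i < size p) (t ^+ i * p`_i).
Proof.
rewrite comp_polyE poly_def; apply: eq_bigr => i _.
by rewrite exprZn scalerA mulrC.
Qed.

Lemma coef_comp_scaleX (t : R) (p : {poly R}) i :
  (p \Po (t *: 'X))`_i = t ^+ i * p`_i.
Proof.
rewrite comp_scaleX coef_poly; case: ltnP => // /(nth_default 0).
by rewrite /= => ->; rewrite mulr0.
Qed.

Lemma eqmodX_comp_scaleX {M} (t : R) {p r} :
  eqmodX M p r -> eqmodX M (p \Po (t *: 'X)) (r \Po (t *: 'X)).
Proof. by move=> pr i lt_iM; rewrite !coef_comp_scaleX pr. Qed.

End TruncatedSeries.

Section CarlitzExponential.
Context {F : finFieldType} (lam : F).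
Local Notation K := (Kfield F).
Local Notation q := #|F|.
Local Notation th := (theta F).
Local Notation iotK := ((@FracField.tofrac _) \o (@polyC F)).
Local Notation t := (th - iotK lam).

Lemma exprD_card_poly (p r : {poly K}) : (p + r) ^+ q = p ^+ q + r ^+ q.
Proof.
apply: exprD_card => p' pF.
by rewrite pchar_poly; apply: (rmorph_pchar iotK).
Qed.

Lemma expr_sum_card N (f : 'I_N -> {poly K}) :
  (\sum_(j < N) f j) ^+ q = \sum_(j < N) f j ^+ q.
Proof.
apply: (big_morph (fun p : {poly K} => p ^+ q) exprD_card_poly).
by rewrite expr0n gtn_eqF // ltnW ?finNzRing_gt1.
Qed.

(* Coefficientwise form of the functional equation, from
   D_(j+1) = (t^(q^(j+1)) - t) D_j^q. *)
Lemma D_inv_twist j :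
  (D F j.+1)^-1 * t ^+ (q ^ j.+1) = t * (D F j.+1)^-1 + (D F j)^-1 ^+ q.
Proof.
have Dj1_neq0 := D_neq0 F j.+1; have Dj_neq0 := D_neq0 F j.
apply: (mulfI Dj1_neq0); rewrite mulrA (mulfV Dj1_neq0) mul1r mulrDr mulrCA.
rewrite (mulfV Dj1_neq0) mulr1 D_rec exprVn (mulfK (expf_neq0 _ Dj_neq0)).
by rewrite expr_card_shift [RHS]addrC addrA subrK.
Qed.

Lemma expC_scale N : expC F N.+1 \Po (t *: 'X) = t *: expC F N.+1 + expC F N ^+ q.
Proof.
rewrite /expC raddf_sum /= expr_sum_card !big_ord_recl scalerDr -addrA; congr (_ + _).
  by rewrite comp_polyZ comp_Xn_poly expn0 !expr1 scalerA mulrC -scalerA.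
rewrite scaler_sumr -big_split /=; apply: eq_bigr => j _.
rewrite comp_polyZ comp_Xn_poly !exprZn -exprM -expnSr !scalerA -scalerDl.
by rewrite D_inv_twist.
Qed.

(* The term z^(q^(n+1)) of e_(n+2) is invisible modulo z^(n+2). *)
Lemma expC_card_trunc n : eqmodX n.+2 (expC F n.+1 ^+ q) (expC F n ^+ q).
Proof.
move=> i lt_in2; rewrite {1}/expC big_ord_recr /= exprD_card_poly coefD.
rewrite exprZn -exprM -expnSr coefZ coefXn.
rewrite (ltn_eqF (leq_trans lt_in2 _)) ?mulr0 ?addr0 //.
by rewrite ltn_expl ?finNzRing_gt1.
Qed.

Lemma expC_scale_trunc n :
  eqmodX n.+2 (expC F n.+1 \Po (t *: 'X)) (expC F n.+1 * (t%:P + expC F n.+1 ^+ q.-1)).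
Proof.
have -> : expC F n.+1 * (t%:P + expC F n.+1 ^+ q.-1) = t *: expC F n.+1 + expC F n.+1 ^+ q.
  by rewrite mulrDr mulrC mul_polyC -exprS prednK // ltnW ?finNzRing_gt1.
by rewrite expC_scale; apply/eqmodXDl/eqmodX_sym/expC_card_trunc.
Qed.

End CarlitzExponential.

Section FormalInverse.
Variable F : finFieldType.
Local Notation K := (Kfield F).
Local Notation q := #|F|.

Lemma size_psinv_upto (a : nat -> K) m : size (psinv_upto a m) = m.+1.
Proof. by elim: m => [|m IH] //=; rewrite size_rcons IH. Qed.

Lemma nth_psinv_upto (a : nat -> K) m k : (k <= m)%N ->
  nth 0 (psinv_upto a m) k = psinv a k.
Proof.
elim: m => [|m IH]; first by rewrite leqn0 => /eqP ->.
rewrite leq_eqVlt => /orP [/eqP -> //|lt_km].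
by rewrite /= nth_rcons size_psinv_upto lt_km IH.
Qed.

Lemma psinvS (a : nat -> K) m : psinv a m.+1 =
  - (a 0%N)^-1 * \sum_(k < m.+1) a k.+1 * psinv a (m - k).
Proof.
rewrite {1}/psinv /= nth_rcons size_psinv_upto ltnn eqxx; congr (_ * _).
by apply: eq_bigr => k _; rewrite nth_psinv_upto // leq_subr.
Qed.

Lemma psinv_conv (a : nat -> K) m : a 0%N = 1 ->
  \sum_(k < m.+1) a k * psinv a (m - k) = (m == 0%N)%:R.
Proof.
move=> a0; case: m => [|m]; first by rewrite big_ord1 /= a0 mul1r /psinv /= a0 invr1.
rewrite big_ord_recl /= a0 mul1r subn0 psinvS a0 invr1 mulN1r.
by under [X in _ + X]eq_bigr do rewrite subSS; rewrite addNr.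
Qed.

Lemma eCz_coef0 : eCz_coef F 0 = 1.
Proof. by rewrite /eCz_coef big_mkcond big_ord1 /= D0 invr1. Qed.

Lemma coef_expC n j : (j <= n)%N -> (expC F n.+1)`_j.+1 = eCz_coef F j.
Proof.
move=> le_jn; rewrite /expC /eCz_coef /qq coef_sum.
rewrite (big_ord_widen_cond n.+1 (fun k => (q ^ k)%N == j.+1) (fun k => (D F k)^-1)) //.
rewrite [RHS]big_mkcond; apply: eq_bigr => k _; rewrite coefZ coefXn eq_sym.
case: eqP => [<-|_]; last by rewrite mulr0.
by rewrite ltn_expl ?finNzRing_gt1 ?mulr1.
Qed.

Lemma coef0_expC N : (expC F N)`_0 = 0.
Proof.
rewrite /expC coef_sum big1 // => k _.
by rewrite coefZ coefXn eq_sym expn_eq0 eqn0Ngt (ltnW (finNzRing_gt1 F)) mulr0.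
Qed.

(* The truncation of z / e_C(z) = sum_n BC(n)/Pi(n) z^n to degree n. *)
Definition zexpC_inv n : {poly K} := \poly_(i < n.+1) psinv (eCz_coef F) i.

Lemma zexpC_invP n : eqmodX n.+2 (zexpC_inv n * expC F n.+1) 'X.
Proof.
move=> [_|m]; first by rewrite coefMr big_ord1 coef0_expC coefX mulr0.
rewrite ltnS => lt_mn.
rewrite coefMr coefX big_ord_recl coef0_expC mulr0 add0r /= -(psinv_conv (eCz_coef F) m eCz_coef0).
apply: eq_bigr => k _; rewrite /= /bump /= add1n subSS coef_poly mulrC.
rewrite coef_expC ?(leq_ltn_trans (leq_subr k m) lt_mn) // -ltnS.
exact: leq_trans (ltn_ord k) lt_mn.
Qed.

End FormalInverse.

Section SeriesIdentity.
Context {F : finFieldType} (lam : F).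
Local Notation K := (Kfield F).
Local Notation q := #|F|.
Local Notation th := (theta F).
Local Notation t := (th - ((@FracField.tofrac _) \o (@polyC F)) lam).
Local Notation g := (psinv (eCz_coef F)).

Lemma expC_expr_pred n : expC F n.+1 ^+ q.-1 =
  \sum_(beta : {ffun 'I_q.-1 -> 'I_n.+1})
     (\prod_(i < q.-1) (D F (beta i))^-1) *: 'X^(qabs F beta).
Proof.
have -> : expC F n.+1 ^+ q.-1 = \prod_(i < q.-1) expC F n.+1.
  by rewrite prodr_const card_ord.
rewrite /expC bigA_distr_bigA.
by apply: eq_bigr => beta _; rewrite scaler_prod prodrXr.
Qed.

Lemma coef_expC_expr_predM n (s : {poly K}) : (expC F n.+1 ^+ q.-1 * s)`_n =
  \sum_(beta : {ffun 'I_q.-1 -> 'I_n.+1} | (qabs F beta <= n)%N)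
     (\prod_(i < q.-1) (D F (beta i))^-1) * s`_(n - qabs F beta).
Proof.
rewrite expC_expr_pred mulr_suml coef_sum [RHS]big_mkcond; apply: eq_bigr => beta _.
rewrite -scalerAl coefZ coefXnM ltnNge.
by case: (qabs F beta <= n)%N; rewrite ?mulr0.
Qed.

(* Functional equation of G(z) = z/e_C(z): from e(t z) = e(z) (t + e(z)^(q-1))
   we get t z G(z) = z (t + e(z)^(q-1)) G(t z), modulo z^(n+2). *)
Lemma zexpC_inv_scale n :
  eqmodX n.+2 ((t *: 'X) * zexpC_inv F n)
     ('X * ((t%:P + expC F n.+1 ^+ q.-1) * (zexpC_inv F n \Po (t *: 'X)))).
Proof.
set G := zexpC_inv F n; set e := expC F n.+1; set P := t%:P + e ^+ q.-1.
set Gt := G \Po (t *: 'X).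
have GeX : eqmodX n.+2 (G * e) 'X := zexpC_invP F n.
have G_scaled : eqmodX n.+2 (t *: 'X) (Gt * (e \Po (t *: 'X))).
  rewrite -[X in eqmodX _ X](comp_polyX (t *: 'X)) -comp_polyM.
  exact/eqmodX_comp_scaleX/eqmodX_sym/GeX.
apply: eqmodX_trans (eqmodXMr G G_scaled) _.
apply: eqmodX_trans (eqmodXMr G (eqmodXMl Gt (expC_scale_trunc lam n))) _.
have -> : Gt * (e * P) * G = (G * e) * (P * Gt) by clearbody G e P Gt; ring.
exact: eqmodXMr _ GeX.
Qed.

Lemma bc_series_identity n :
  t * g n = t * (t ^+ n * g n) +
  \sum_(beta : {ffun 'I_q.-1 -> 'I_n.+1} | (qabs F beta <= n)%N)
     (\prod_(i < q.-1) (D F (beta i))^-1) * (t ^+ (n - qabs F beta) * g (n - qabs F beta)).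
Proof.
have := zexpC_inv_scale n n.+1 (ltnSn n.+1).
rewrite -scalerAl coefZ coefXM coefXM /= [in X in _ = X -> _]mulrDl mul_polyC coefD coefZ.
rewrite coef_expC_expr_predM coef_comp_scaleX /zexpC_inv !coef_poly ltnSn => ->.
congr (_ + _); apply: eq_bigr => beta _.
by rewrite coef_comp_scaleX coef_poly ltnS leq_subr.
Qed.

End SeriesIdentity.

Lemma digit_sum (Q : nat) (c : nat -> nat) N i : (forall j, c j < Q)%N ->
  ((\sum_(j < N) c j * Q ^ j) %/ Q ^ i %% Q = if (i < N)%N then c i else 0)%N.
Proof.
elim: N c i => [|N IH] c i c_lt; first by rewrite big_ord0 div0n mod0n.
have Q_gt0 : (0 < Q)%N by apply: leq_ltn_trans (c_lt 0%N).
rewrite big_ord_recl expn0 muln1.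
have -> : (\sum_(j < N) c (bump 0 j) * Q ^ bump 0 j = (\sum_(j < N) c j.+1 * Q ^ j) * Q)%N.
  rewrite big_distrl /=; apply: eq_bigr => j _.
  by rewrite /bump /= add1n expnS mulnCA mulnC.
case: i => [|i]; first by rewrite expn0 divn1 addnC modnMDl modn_small.
rewrite expnS divnMA addnC divnMDl // (divn_small (c_lt 0%N)) addn0.
by have := IH (fun j => c j.+1) i (fun j => c_lt j.+1); rewrite ltnS => <-.
Qed.

Lemma prod_expr_widen (R : comNzRingType) (f : nat -> R) (e : nat -> nat) A B :
  (A <= B)%N -> (forall i, (A <= i)%N -> (i < B)%N -> e i = 0%N) ->
  \prod_(i < B) f i ^+ e i = \prod_(i < A) f i ^+ e i.
Proof.
move=> le_AB e0; rewrite (big_ord_widen B (fun i => f i ^+ e i) le_AB) [RHS]big_mkcond.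
by apply: eq_bigr => i _; case: ifP => // /negbT; rewrite -leqNgt => /e0 ->.
Qed.

Section FactorialDigits.
Variable F : finFieldType.
Local Notation q := #|F|.

Lemma CPi_neq0 m : CPi F m != 0.
Proof. by apply/prodf_neq0 => i _; rewrite expf_neq0 // D_neq0. Qed.

Lemma CPi_digits N (c : nat -> nat) : (forall j, c j < q)%N ->
  CPi F (\sum_(j < N) c j * q ^ j) = \prod_(j < N) D F j ^+ c j.
Proof.
move=> c_lt; set m := (\sum_(j < N) _)%N.
pose e i := if (i < N)%N then c i else 0%N.
have digit_m i : qdigit F m i = e i by rewrite /qdigit /qq digit_sum.
rewrite /CPi (eq_bigr (fun i : 'I_m.+1 => D F i ^+ e i)) => [|i _]; last by rewrite digit_m.
rewrite -(@prod_expr_widen _ (D F) e m.+1 (m.+1 + N)) ?leq_addr //; last first.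
  move=> i le_mi _; rewrite -digit_m /qdigit divn_small ?mod0n //.
  apply: (leq_trans (ltn_expl m (finNzRing_gt1 F))).
  by rewrite leq_exp2l ?finNzRing_gt1 // ltnW.
rewrite (@prod_expr_widen _ (D F) e N (m.+1 + N)) ?leq_addl //.
  by apply: eq_bigr => j _; rewrite /e ltn_ord.
by move=> i le_Ni _; rewrite /e ltnNge le_Ni.
Qed.

(* For beta with q-1 < q entries, the digit j of |q^beta| counts the entries
   equal to j, hence Pi(|q^beta|) = prod_i D_(beta_i). *)
Lemma CPi_qabs n (beta : {ffun 'I_q.-1 -> 'I_n.+1}) :
  CPi F (qabs F beta) = \prod_(i < q.-1) D F (beta i).
Proof.
pose cnt (j : nat) := #|[pred i : 'I_q.-1 | nat_of_ord (beta i) == j]|.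
have cnt_lt j : (cnt j < q)%N.
  apply: (leq_ltn_trans (max_card _)).
  by rewrite card_ord prednK // ltnW // finNzRing_gt1.
have -> : qabs F beta = (\sum_(j < n.+1) cnt j * q ^ j)%N.
  rewrite /qabs /qq (partition_big beta xpredT) //=; apply: eq_bigr => j _.
  rewrite (eq_bigr (fun _ => (q ^ j)%N)); last by move=> i /eqP ->.
  by rewrite sum_nat_const; congr (_ * _)%N; apply: eq_card.
rewrite CPi_digits // (partition_big beta xpredT) //=; apply: eq_bigr => j _.
rewrite (eq_bigr (fun _ => D F j)); last by move=> i /eqP ->.
by rewrite prodr_const; congr (_ ^+ _); apply: eq_card.
Qed.

End FactorialDigits.

Lemma exprz_sub1 (R : fieldType) (t : R) (n k : nat) : t != 0 -> (k <= n)%N ->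
  t ^ (n%:Z - 1 - k%:Z) = t ^+ (n - k) * t^-1.
Proof.
move=> t_neq0 le_kn.
have -> : n%:Z - 1 - k%:Z = (n - k)%N%:Z + (-1) by rewrite addrAC subzn.
by rewrite expfzDr // exprN1 -exprnP.
Qed.

Lemma cancel_factor (R : fieldType) (a b c u v w : R) : b != 0 -> c != 0 -> w != 0 ->
  a / (b * c) * (u / w) * (b * v) = a / w * (c^-1 * (u * v)).
Proof. by move=> b_neq0 c_neq0 w_neq0; field; apply/and3P. Qed.

Lemma bc_summand {F : finFieldType} {t : Kfield F} {n : nat}
    (beta : {ffun 'I_#|F|.-1 -> 'I_n.+1}) :
  t != 0 -> (qabs F beta <= n)%N ->
  cbinom F n (n - qabs F beta) (qabs F beta) * t ^ (n%:Z - 1 - (qabs F beta)%:Z)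
    * BC F (n - qabs F beta) =
  CPi F n / t * ((\prod_(i < #|F|.-1) (D F (beta i))^-1) *
    (t ^+ (n - qabs F beta) * psinv (eCz_coef F) (n - qabs F beta))).
Proof.
move=> t_neq0 le_beta_n; rewrite /cbinom /BC CPi_qabs exprz_sub1 // prodfV.
have Pi_neq0 := CPi_neq0 F (n - qabs F beta).
have Dbeta_neq0 : \prod_(i < #|F|.-1) D F (beta i) != 0.
  by apply/prodf_neq0 => i _; apply: D_neq0.
exact: (@cancel_factor (Kfield F) _ _ _ _ _ _ Pi_neq0 Dbeta_neq0 t_neq0).
Qed.

Theorem proposition3p7 (F : finFieldType) (hq : (2 < #|F|)%N) :
  BC F 0 = 1 /\
  forall (n : nat), (0 < n)%N -> (#|F|.-1 %| n)%N -> forall lam : F,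
    let t : Kfield F := theta F - toK lam%:P in
    (1 - t ^+ n) * BC F n =
    \sum_(beta : {ffun 'I_(#|F|.-1) -> 'I_n.+1} | (qabs F beta <= n)%N)
       cbinom F n (n - qabs F beta) (qabs F beta)
       * t ^ (n%:Z - 1 - (qabs F beta)%:Z)
       * BC F (n - qabs F beta).
Proof.
split.
  by rewrite /BC /CPi big_ord1 /qdigit div0n mod0n expr0 mul1r /psinv /= eCz_coef0 invr1.
move=> n _ _ lam t.
have t_neq0 : t != 0 by rewrite /t /theta /toK -rmorphB tofrac_eq0 polyXsubC_eq0.
rewrite (eq_bigr _ (fun beta => bc_summand beta t_neq0)) -mulr_sumr.
have := bc_series_identity lam n; rewrite -/t.
set S := \sum_(beta | _) _ => series.
have -> : S = t * (psinv (eCz_coef F) n - t ^+ n * psinv (eCz_coef F) n).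
  by rewrite mulrBr series addrAC subrr add0r.
by rewrite mulrA divfK // /BC mulrCA mulrBl mul1r.
Qed.
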